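(* Fix $y>0$ and $0\le p_1'<p_1''\le y$. Let $q_1(\cdot,\cdot)$ be APT-rationalizable, and let $\overline{p_1}$ be the minimum price $p_1\in[0,y]$ with $q_1(p_1,y)=0$. Let $F^{APT}$ be the CDF of the distribution placing probability $1-q_1(p_1',y)$ at $0$, probability $q_1(p_1',y)-q_1(p_1'',y)$ at $\overline{p_1}-p_1'$, and probability $q_1(p_1'',y)$ at $p_1''-p_1'$. Let $F^{RUM}(z)=0$ for $z<0$, $F^{RUM}(z)=1-q_1(p_1'+z,y)$ for $0\le z<p_1''-p_1'$, and $F^{RUM}(z)=1$ for $z\ge p_1''-p_1'$. Then $F^{APT}$ first-order stochastically dominates $F^{RUM}$, i.e. $F^{APT}(z)\le F^{RUM}(z)$ for all real $z$.
   Context: Two goods: good 0 (price $0$) and good 1 (price $p_1\ge0$); consumers have common income $y>0$, choose one good and spend the rest on a numeraire; $q_1(p_1,y)$ is the population probability of choosing good 1, defined for $y>0$, $p_1\in[0,y]$. $q_1$ is APT-rationalizable if there exist $U_0:(0,\infty)\to[0,\infty)$ strictly increasing, $U_1:[0,\infty)\to[0,\infty)$ continuous and strictly increasing, with: for every $y>0$ some $\bar p_1\in[0,y]$ has $U_0(y)\ge U_1(y-\bar p_1)$; and a CDF $G$ of attention thresholds with $G(0)=0$, such that $q_{1}(p_{1},y)=\mathbb{1}\{U_{0}(y)<U_{1}(y-p_{1})\}\,(1-G(p_{1}))$. (In the paper, $F^{APT}$ is the distribution of equivalent variation of the price increase from $p_1'$ to $p_1''$ identified under this model when additionally $G(t)<1$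 for all finite $t$, and $F^{RUM}$ is the distribution of equivalent variation identified under a random utility model with full attention, both from observing $q_1(p_1,y)$ for all $p_1\in[p_1',y]$.) *)

From Stdlib Require Import Reals Lra.
Open Scope R_scope.

Definition is_cdf (G : R -> R) : Prop :=
  (forall s t, s <= t -> G s <= G t) /\
  (forall t eps, 0 < eps -> exists d, 0 < d /\
       forall s, t <= s -> s < t + d -> Rabs (G s - G t) < eps) /\
  (forall eps, 0 < eps -> exists M, forall t, t <= M -> Rabs (G t) < eps) /\
  (forall eps, 0 < eps -> exists M, forall t, M <= t -> Rabs (G t - 1) < eps).

Definition ind {b : Prop} (d : {b} + {~ b}) : R := if d then 1 else 0.

(* q1 p1 y : probability of choosing good 1 at price p1 and income y
   (only meaningful for y > 0, 0 <= p1 <= y). *)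
Definition APT_rationalizable (q1 : R -> R -> R) : Prop :=
  exists (U0 U1 G : R -> R),
    (forall a, 0 < a -> 0 <= U0 a) /\
    (forall a b, 0 < a -> a < b -> U0 a < U0 b) /\
    (forall a, 0 <= a -> 0 <= U1 a) /\
    (forall a b, 0 <= a -> a < b -> U1 a < U1 b) /\
    (forall x eps, 0 <= x -> 0 < eps -> exists d, 0 < d /\
        forall x', 0 <= x' -> Rabs (x' - x) < d -> Rabs (U1 x' - U1 x) < eps) /\
    (forall y, 0 < y -> exists pb, 0 <= pb <= y /\ U1 (y - pb) <= U0 y) /\
    is_cdf G /\ G 0 = 0 /\
    (forall p1 y, 0 < y -> 0 <= p1 <= y ->
       q1 p1 y = ind (Rlt_dec (U0 y) (U1 (y - p1))) * (1 - G p1)).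

Definition F_APT (q1 : R -> R -> R) (y p' p'' pbar z : R) : R :=
  (1 - q1 p' y) * ind (Rle_dec 0 z)
  + (q1 p' y - q1 p'' y) * ind (Rle_dec (pbar - p') z)
  + q1 p'' y * ind (Rle_dec (p'' - p') z).

Definition F_RUM (q1 : R -> R -> R) (y p' p'' z : R) : R :=
  if Rlt_dec z 0 then 0
  else if Rlt_dec z (p'' - p') then 1 - q1 (p' + z) y
  else 1.

(** Under attention thresholds the choice probability of good 1 is a product of
    two factors in [0,1] that are nonincreasing in the price: the preference
    indicator [U0 y < U1 (y - p1)] and the attention probability [1 - G p1].
    Hence [q1 (., y)] is a nonincreasing probability on [0, y], and
    [q1 p y = 0] for [p >= pbar].  On [0 <= z < p'' - p'] the APT distribution
    function is [1 - q1 p' y] below [pbar - p'], which is at most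
    [1 - q1 (p' + z) y] by monotonicity, and at most [1] from [pbar - p'] on,
    where [q1 (p' + z) y = 0].  Left of [0] it can only be positive if
    [pbar < p'], which forces [q1 p' y = q1 p'' y = 0]; right of [p'' - p'] it
    is at most the total mass [1]. *)

From Pilot Require Import Defs.
From Stdlib Require Import Reals Lra.
Open Scope R_scope.

Lemma cdf_le_1 (G : R -> R) : is_cdf G -> forall t, G t <= 1.
Proof.
  intros [G_mono [_ [_ G_lim_1]]] t.
  destruct (Rle_dec (G t) 1) as [le_Gt_1 | gt_Gt_1]; [exact le_Gt_1 |].
  destruct (G_lim_1 (G t - 1)) as [M HM]; [lra |].
  specialize (HM (Rmax M t) (Rmax_l M t)).
  assert (G t <= G (Rmax M t)) by (apply G_mono, Rmax_r).
  apply Rabs_def2 in HM; lra.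
Qed.

(* [Reals] shadows [Defs.ind] with an unrelated [ind], hence the qualified name. *)
Lemma ind_bounds (b : Prop) (d : {b} + {~ b}) : 0 <= Defs.ind d <= 1.
Proof. unfold Defs.ind; destruct d; lra. Qed.

Lemma ind_Rlt_le_compat (a c c' : R) :
  c <= c' -> Defs.ind (Rlt_dec a c) <= Defs.ind (Rlt_dec a c').
Proof.
  intros le_c_c'; unfold Defs.ind.
  destruct (Rlt_dec a c), (Rlt_dec a c'); lra.
Qed.

Lemma strict_incr_le_compat (f : R -> R) :
  (forall a b, 0 <= a -> a < b -> f a < f b) ->
  forall a b, 0 <= a -> a <= b -> f a <= f b.
Proof.
  intros f_incr a b a_ge0 [lt_a_b | ->]; [apply Rlt_le, f_incr |]; lra.
Qed.

Section APTChoiceProbability.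

Variables (q1 : R -> R -> R) (y : R).
Hypotheses (y_gt0 : 0 < y) (q1_APT : APT_rationalizable q1).

Lemma APT_choice_prob_bounds p : 0 <= p <= y -> 0 <= q1 p y <= 1.
Proof.
  intros p_range.
  destruct q1_APT as (U0 & U1 & G & _ & _ & _ & _ & _ & _ & G_cdf & G0 & q1E).
  rewrite (q1E p y y_gt0 p_range).
  assert (0 <= G p) by (rewrite <- G0; apply (proj1 G_cdf); lra).
  pose proof (cdf_le_1 G G_cdf p).
  pose proof (ind_bounds _ (Rlt_dec (U0 y) (U1 (y - p)))).
  split; [apply Rmult_le_pos | rewrite <- (Rmult_1_r 1); apply Rmult_le_compat]; lra.
Qed.

Lemma APT_choice_prob_nonincreasing p p2 :
  0 <= p -> p <= p2 -> p2 <= y -> q1 p2 y <= q1 p y.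
Proof.
  intros p_ge0 le_p_p2 p2_le_y.
  destruct q1_APT as (U0 & U1 & G & _ & _ & _ & U1_incr & _ & _ & G_cdf & G0 & q1E).
  rewrite (q1E p y y_gt0 ltac:(lra)), (q1E p2 y y_gt0 ltac:(lra)).
  assert (G p <= G p2) by (apply (proj1 G_cdf); lra).
  pose proof (cdf_le_1 G G_cdf p2).
  pose proof (ind_bounds _ (Rlt_dec (U0 y) (U1 (y - p2)))).
  apply Rmult_le_compat; try lra.
  apply ind_Rlt_le_compat, (strict_incr_le_compat U1 U1_incr); lra.
Qed.

End APTChoiceProbability.

Section StochasticDominance.

Variables (q1 : R -> R -> R) (y p' p'' pbar : R).
Hypothesis q1_bounds : forall p, 0 <= p <= y -> 0 <= q1 p y <= 1.
Hypothesis q1_nonincreasing :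
  forall p p2, 0 <= p -> p <= p2 -> p2 <= y -> q1 p2 y <= q1 p y.
Hypotheses (p'_ge0 : 0 <= p') (lt_p'_p'' : p' < p'') (p''_le_y : p'' <= y).
Hypotheses (pbar_range : 0 <= pbar <= y) (q1_pbar : q1 pbar y = 0).

Let q1_p'_bounds : 0 <= q1 p' y <= 1. Proof. apply q1_bounds; lra. Qed.
Let q1_p''_bounds : 0 <= q1 p'' y <= 1. Proof. apply q1_bounds; lra. Qed.
Let q1_p''_le_p' : q1 p'' y <= q1 p' y. Proof. apply q1_nonincreasing; lra. Qed.

Lemma F_APT_le_0 z : z < 0 -> F_APT q1 y p' p'' pbar z <= 0.
Proof.
  intros z_lt0; unfold F_APT, Defs.ind.
  destruct (Rle_dec 0 z); [lra |].
  destruct (Rle_dec (p'' - p') z); [lra |].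
  destruct (Rle_dec (pbar - p') z); [| lra].
  assert (q1 p' y <= q1 pbar y) by (apply q1_nonincreasing; lra).
  lra.
Qed.

Lemma F_APT_le_1 z : F_APT q1 y p' p'' pbar z <= 1.
Proof.
  unfold F_APT, Defs.ind.
  destruct (Rle_dec 0 z), (Rle_dec (pbar - p') z), (Rle_dec (p'' - p') z); lra.
Qed.

Lemma F_APT_le_RUM_interior z :
  0 <= z < p'' - p' -> F_APT q1 y p' p'' pbar z <= 1 - q1 (p' + z) y.
Proof.
  intros z_range; unfold F_APT, Defs.ind.
  assert (q1 (p' + z) y <= q1 p' y) by (apply q1_nonincreasing; lra).
  destruct (Rle_dec 0 z), (Rle_dec (pbar - p') z), (Rle_dec (p'' - p') z);
    try lra.
  assert (q1 (p' + z) y <= q1 pbar y) by (apply q1_nonincreasing; lra).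
  lra.
Qed.

Lemma F_APT_le_F_RUM z : F_APT q1 y p' p'' pbar z <= F_RUM q1 y p' p'' z.
Proof.
  unfold F_RUM.
  destruct (Rlt_dec z 0) as [z_lt0 | z_ge0]; [now apply F_APT_le_0 |].
  destruct (Rlt_dec z (p'' - p')); [apply F_APT_le_RUM_interior; lra |].
  apply F_APT_le_1.
Qed.

End StochasticDominance.

Theorem theorem5 (q1 : R -> R -> R) (y p' p'' pbar : R) :
  0 < y -> 0 <= p' -> p' < p'' -> p'' <= y ->
  APT_rationalizable q1 ->
  (* pbar is the minimum price in [0,y] with q1(pbar,y) = 0 *)
  0 <= pbar <= y -> q1 pbar y = 0 ->
  (forall p1, 0 <= p1 <= y -> q1 p1 y = 0 -> pbar <= p1) ->
  forall z : R, F_APT q1 y p' p'' pbar z <= F_RUM q1 y p' p'' z.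
Proof.
  intros y_gt0 p'_ge0 lt_p'_p'' p''_le_y q1_APT pbar_range q1_pbar _ z.
  apply F_APT_le_F_RUM; try assumption.
  - exact (APT_choice_prob_bounds q1 y y_gt0 q1_APT).
  - exact (APT_choice_prob_nonincreasing q1 y y_gt0 q1_APT).
Qed.
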